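(* Let $\mathcal M''=\bigcup_{K=1}^{\min(M,N)}\mathcal F_K^{\mathrm{an}}\times \mathcal Q_K^{\mathrm{in}}$. Then $\mathcal M''$ is identifiable: for all $(F^1,Q^1),(F^2,Q^2)\in\mathcal M''$, $F^1Q^1=F^2Q^2$ implies $(F^1,Q^1)\sim(F^2,Q^2)$.
   Context: Fix positive integers $M$ and $N$. For a positive integer $K$, $\mathcal F_K$ is the set of real $M\times K$ matrices with all entries in $[0,1]$, and $\mathcal Q_K$ is the set of real $K\times N$ matrices with entries in $[0,1]$ each of whose columns sums to $1$. $\mathcal F_K^{\mathrm{an}}$ is the set of $F\in\mathcal F_K$ such that for every $k\in\{1,\dots,K\}$ there is a row $s$ with $F_{sk}>0$ and $F_{s\ell}=0$ for all $\ell\neq k$. $\mathcal Q_K^{\mathrm{in}}$ is the set of $Q\in\mathcal Q_K$ whose rows are linearly independent. $(F^1,Q^1)\sim(F^2,Q^2)$ means $F^1,F^2$ have the same number $K$ of columns and there is a permutation $\pi$ of $\{1,\dots,K\}$ with $F^2_{sk}=F^1_{s\pi(k)}$ and $Q^2_{ki}=Q^1_{\pi(k)i}$ for all $s,k,i$. A set $\mathcal M\subseteq\bigcup_{K\ge1}\mathcal F_K\times\mathcal Q_K$ is identifiable if for all $(F^1,Q^1),(F^2,Q^2)\in\mathcal M$, $F^1Q^1=F^2Q^2$ implies $(F^1,Q^1)\sim(F^2,Q^2)$. *)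

From HB Require Import structures.
From mathcomp Require Import all_boot all_order all_algebra.
From mathcomp Require Import reals.
Set Implicit Arguments. Unset Strict Implicit. Unset Printing Implicit Defensive.
Import Order.TTheory GRing.Theory Num.Theory.
Local Open Scope ring_scope.

Definition inF (R : realType) (M K : nat) (F : 'M[R]_(M, K)) : Prop :=
  forall s k, 0 <= F s k <= 1.

Definition inQ (R : realType) (K N : nat) (Q : 'M[R]_(K, N)) : Prop :=
  (forall k i, 0 <= Q k i <= 1) /\ (forall i, \sum_(k < K) Q k i = 1).

Definition inFan (R : realType) (M K : nat) (F : 'M[R]_(M, K)) : Prop :=
  inF F /\ forall k : 'I_K, exists s : 'I_M,
     0 < F s k /\ forall l : 'I_K, l != k -> F s l = 0.

Definition inQin (R : realType) (K N : nat) (Q : 'M[R]_(K, N)) : Prop :=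
  inQ Q /\ row_free Q.

Definition inM2 (R : realType) (M N K : nat) (F : 'M[R]_(M, K)) (Q : 'M[R]_(K, N)) : Prop :=
  (1 <= K)%N /\ (K <= minn M N)%N /\ inFan F /\ inQin Q.

Definition equiv_pairs (R : realType) (M N K1 K2 : nat)
    (F1 : 'M[R]_(M, K1)) (Q1 : 'M[R]_(K1, N))
    (F2 : 'M[R]_(M, K2)) (Q2 : 'M[R]_(K2, N)) : Prop :=
  exists pi : 'I_K2 -> 'I_K1, bijective pi /\
    (forall s k, F2 s k = F1 s (pi k)) /\ (forall k i, Q2 k i = Q1 (pi k) i).

(* Each anchor row of F2 expresses a row of Q2 as a nonnegative combination of
   the rows of Q1, so Q2 = A Q1 with A >= 0, and symmetrically Q1 = B Q2 with
   B >= 0.  Since the rows of Q1 and Q2 are independent, A and B are mutually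
   inverse.  A nonnegative matrix with a nonnegative inverse has exactly one
   nonzero entry per row, and the column sums of Q1 and Q2 force these entries
   to be 1 and the supports to form a bijection: A is a permutation matrix. *)

From HB Require Import structures.
From mathcomp Require Import all_boot all_order all_algebra.
From mathcomp Require Import reals.
Set Implicit Arguments. Unset Strict Implicit. Unset Printing Implicit Defensive.
Import Order.TTheory GRing.Theory Num.Theory.
Local Open Scope ring_scope.

Lemma mulmx_eq1_row_neq0 (R : nzRingType) m n (X : 'M[R]_(m, n)) (Y : 'M[R]_(n, m)) i :
  X *m Y = 1%:M -> exists k, X i k != 0.
Proof.
move=> XY; apply/existsP; apply: contraT => /existsPn X_i0.
have : (X *m Y) i i = 0.
  by rewrite mxE big1 // => k _; have /negPn/eqP -> := X_i0 k; rewrite mul0r.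
by rewrite XY mxE eqxx => /eqP; rewrite oner_eq0.
Qed.

Lemma mulmx_ge0_eq1_offdiag (R : numDomainType) m n
    (X : 'M[R]_(m, n)) (Y : 'M[R]_(n, m)) :
  (forall i k, 0 <= X i k) -> (forall k j, 0 <= Y k j) -> X *m Y = 1%:M ->
  forall i j k, i != j -> X i k * Y k j = 0.
Proof.
move=> X_ge0 Y_ge0 XY i j k neq_ij.
have : (X *m Y) i j = 0 by rewrite XY mxE (negbTE neq_ij).
by rewrite mxE => /psumr_eq0P -> // l _; apply: mulr_ge0.
Qed.

Lemma mxsub1_inj (R : pzSemiRingType) m n (f : 'I_m -> 'I_n) :
  injective f -> mxsub f f (1%:M : 'M[R]_n) = 1%:M.
Proof. by move=> f_inj; apply/matrixP => i j; rewrite !mxE (inj_eq f_inj). Qed.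

Section NonnegInverse.

Variables (R : numDomainType) (m n : nat) (A : 'M[R]_(m, n)) (B : 'M[R]_(n, m)).
Hypotheses (A_ge0 : forall i j, 0 <= A i j) (B_ge0 : forall j i, 0 <= B j i).
Hypotheses (mulAB : A *m B = 1%:M) (mulBA : B *m A = 1%:M).

Lemma nonneg_inverse_row_support_uniq k j l : A k j != 0 -> A k l != 0 -> j = l.
Proof.
move=> Akj_neq0 Akl_neq0; apply/eqP; apply: contraT => neq_jl.
have offBA := mulmx_ge0_eq1_offdiag B_ge0 A_ge0 mulBA.
have Bk0 i : B i k = 0.
  have [-> | neq_il] := eqVneq i l.
    by apply: (mulIf Akj_neq0); rewrite mul0r offBA // eq_sym.
  by apply: (mulIf Akl_neq0); rewrite mul0r offBA.
suff : (A *m B) k k = 0 by rewrite mulAB mxE eqxx => /eqP; rewrite oner_eq0.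
by rewrite mxE big1 // => i _; rewrite Bk0 mulr0.
Qed.

Lemma nonneg_inverse_row_support :
  exists2 pi : 'I_m -> 'I_n, injective pi & forall k j, A k j != 0 -> j = pi k.
Proof.
have /fin_all_exists [pi Api_neq0] : forall k, exists j, A k j != 0.
  by move=> k; exact: mulmx_eq1_row_neq0 mulAB.
have supp k j : A k j != 0 -> j = pi k.
  by move/nonneg_inverse_row_support_uniq; apply.
exists pi => // k k' eq_pi; apply/eqP; apply: contraT => neq_kk'.
have Bpik' : B (pi k) k' = 0.
  apply: (mulfI (Api_neq0 k)).
  by rewrite mulr0 (mulmx_ge0_eq1_offdiag A_ge0 B_ge0 mulAB).
suff : (A *m B) k' k' = 0 by rewrite mulAB mxE eqxx => /eqP; rewrite oner_eq0.
rewrite mxE big1 // => j _; have [-> | /supp ->] := eqVneq (A k' j) 0.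
  by rewrite mul0r.
by rewrite -eq_pi Bpik' mulr0.
Qed.

Hypothesis colsum_A : forall j, \sum_i A i j = 1.

Lemma nonneg_inverse_stochastic_rowsub :
  exists2 pi : 'I_m -> 'I_n, bijective pi & A = rowsub pi 1%:M.
Proof.
have [pi pi_inj supp] := nonneg_inverse_row_support.
have A_off k j : j != pi k -> A k j = 0.
  by move=> neq_j; apply/eqP; apply: contraNT neq_j => /supp ->.
have pi_surj j : exists k, pi k = j.
  have /existsP [k Akj_neq0] : [exists k, A k j != 0].
    apply: contraT => /existsPn A_j0; rewrite -(oner_eq0 R) -(colsum_A j).
    by rewrite big1 // => k _; apply/eqP/negPn; exact: A_j0.
  by exists k; rewrite (supp _ _ Akj_neq0).
have Api1 k : A k (pi k) = 1.
  rewrite -[RHS](colsum_A (pi k)) (bigD1 k) //= big1 ?addr0 // => k' neq_k'k.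
  by apply: A_off; rewrite (inj_eq pi_inj) eq_sym.
have [g pi_g] := fin_all_exists pi_surj.
exists pi; first by exists g => [k | j]; [apply: pi_inj; rewrite pi_g | apply: pi_g].
apply/matrixP => k j; rewrite !mxE eq_sym.
by have [-> | /A_off ->] := eqVneq j (pi k); rewrite ?Api1.
Qed.

End NonnegInverse.

Lemma anchored_mulmx_factor (R : numFieldType) M N K1 K2
    (F1 : 'M[R]_(M, K1)) (Q1 : 'M[R]_(K1, N)) (F2 : 'M[R]_(M, K2)) (Q2 : 'M[R]_(K2, N)) :
  (forall s j, 0 <= F1 s j) ->
  (forall k, exists s, 0 < F2 s k /\ forall l, l != k -> F2 s l = 0) ->
  F1 *m Q1 = F2 *m Q2 ->
  exists2 A : 'M[R]_(K2, K1), (forall k j, 0 <= A k j) & Q2 = A *m Q1.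
Proof.
move=> F1_ge0 anchor E; have [s anchor_s] := fin_all_exists anchor.
exists (\matrix_(k, j) ((F2 (s k) k)^-1 * F1 (s k) j)) => [k j | ].
  by rewrite mxE mulr_ge0 // invr_ge0 ltW // (anchor_s k).1.
apply/matrixP => k i.
(* entry (s k, i) of F1 Q1 = F2 Q2 only sees row k of Q2 *)
have -> : Q2 k i = (F2 (s k) k)^-1 * (F1 *m Q1) (s k) i.
  rewrite E mxE (bigD1 k) //= big1 ?addr0 => [| l neq_lk].
    by rewrite mulKf // gt_eqF // (anchor_s k).1.
  by rewrite (anchor_s k).2 // mul0r.
by rewrite !mxE mulr_sumr; apply: eq_bigr => j _; rewrite mxE mulrA.
Qed.

Lemma row_free_mulmx_eq1 (F : fieldType) m n (Q : 'M[F]_(m, n)) (C : 'M[F]_m) :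
  row_free Q -> C *m Q = Q -> C = 1%:M.
Proof. by move=> Q_free CQ; apply: (row_free_inj Q_free); rewrite mul1mx. Qed.

Lemma colsum_eq1P (R : pzSemiRingType) m n (X : 'M[R]_(m, n)) :
  (forall j, \sum_i X i j = 1) <-> (const_mx 1 : 'rV_m) *m X = const_mx 1.
Proof.
have colsum j : ((const_mx 1 : 'rV_m) *m X) 0 j = \sum_i X i j.
  by rewrite mxE; apply: eq_bigr => i _; rewrite mxE mul1r.
split=> [X_sum | /matrixP X_sum j]; last by rewrite -colsum X_sum mxE.
by apply/matrixP => i j; rewrite ord1 colsum X_sum mxE.
Qed.

Lemma row_free_colsum_eq1 (F : fieldType) m n p
    (A : 'M[F]_(m, n)) (Q1 : 'M[F]_(n, p)) (Q2 : 'M[F]_(m, p)) :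
  row_free Q1 -> Q2 = A *m Q1 ->
  (forall i, \sum_k Q1 k i = 1) -> (forall i, \sum_k Q2 k i = 1) ->
  forall j, \sum_k A k j = 1.
Proof.
move=> Q1_free EQ /colsum_eq1P Q1_sum /colsum_eq1P Q2_sum; apply/colsum_eq1P.
by apply: (row_free_inj Q1_free); rewrite /= -mulmxA -EQ Q1_sum Q2_sum.
Qed.

Lemma inF_ge0 (R : realType) M K (F : 'M[R]_(M, K)) : inF F -> forall s k, 0 <= F s k.
Proof. by move=> F01 s k; case/andP: (F01 s k). Qed.

Theorem mainTheorem3 (R : realType) (M N K1 K2 : nat)
    (F1 : 'M[R]_(M, K1)) (Q1 : 'M[R]_(K1, N))
    (F2 : 'M[R]_(M, K2)) (Q2 : 'M[R]_(K2, N)) :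
  inM2 F1 Q1 -> inM2 F2 Q2 ->
  F1 *m Q1 = F2 *m Q2 ->
  equiv_pairs F1 Q1 F2 Q2.
Proof.
move=> [_ [_ [[F1_01 F1_anchor] [[_ Q1_sum] Q1_free]]]].
move=> [_ [_ [[F2_01 F2_anchor] [[_ Q2_sum] Q2_free]]]] E.
have [A A_ge0 EA] := anchored_mulmx_factor (inF_ge0 F1_01) F2_anchor E.
have [B B_ge0 EB] := anchored_mulmx_factor (inF_ge0 F2_01) F1_anchor (esym E).
have BA : B *m A = 1%:M by apply: (row_free_mulmx_eq1 Q1_free); rewrite -mulmxA -EA.
have AB : A *m B = 1%:M by apply: (row_free_mulmx_eq1 Q2_free); rewrite -mulmxA -EB.
have [pi pi_bij defA] := nonneg_inverse_stochastic_rowsub A_ge0 B_ge0 AB BA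
  (row_free_colsum_eq1 Q1_free EA Q1_sum Q2_sum).
have F2A : F2 *m A = F1 by apply: (row_free_inj Q1_free); rewrite /= -mulmxA -EA E.
have F2E : F2 = colsub pi F1.
  by rewrite -F2A defA -mulmx_colsub -mxsubcr mxsub1_inj ?mulmx1 //; apply: bij_inj.
have Q2E : Q2 = rowsub pi Q1 by rewrite EA defA -rowsubE.
by exists pi; split=> //; split=> [s k | k i]; rewrite ?F2E ?Q2E mxE.
Qed.
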